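(* In the method U-CS$(\hat x_0,\chi,\lambda_0,\bar\varepsilon)$ described in the context, if at some execution of Step 1 the current stepsize $\lambda$ satisfies \[ \lambda\le\frac{(1-\chi)^2\bar\varepsilon}{4M_f^2+\bar\varepsilon L_f}, \] then the point $x$ computed in Step 1 satisfies the inequality tested in Step 2, i.e. $f(x)-\ell_f(x;\hat x_{k-1})-(1-\chi)\|x-\hat x_{k-1}\|^2/(2\lambda)\le(1-\chi)\bar\varepsilon/2$. Consequently, if $\lambda_0$ is chosen equal to $\frac{(1-\chi)^2\bar\varepsilon}{4M_f^2+\bar\varepsilon L_f}$, then $\lambda$ remains constant throughout the method.
   Context: Setting: $f,h:\mathbb{R}^n\to\mathbb{R}\cup\{+\infty\}$ proper lsc convex with $\mathrm{dom}\, h\subseteq\mathrm{dom}\, f$, $\phi=f+h$, $\phi_*=\inf\phi$ attained. A subgradient oracle $f':\mathrm{dom}\, h\to\mathbb{R}^n$, $f'(x)\in\partial f(x)$, satisfies $\|f'(x)-f'(y)\|\le2M_f+L_f\|x-y\|$ for all $x,y\in\mathrm{dom}\, h$, with $M_f,L_f\ge0$. $\ell_f(u;x):=f(x)+\langle f'(x),u-x\rangle$. U-CS$(\hat x_0,\chi,\lambda_0,\bar\varepsilon)$ with inputs in $\mathrm{dom}\, h\times[0,1)\times\mathbb{R}_{++}\times\mathbb{R}_{++}$: Step 0: $\lambda=\lambda_0$, $k=1$. Step 1: $x=\mathrm{argmin}_u\{\ell_f(u;\hat x_{k-1})+h(u)+\frac1{2\lambda}\|u-\hat x_{k-1}\|^2\}$;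 if $\phi(x)-\phi_*\le\bar\varepsilon$ stop. Step 2: if $f(x)-\ell_f(x;\hat x_{k-1})-(1-\chi)\|x-\hat x_{k-1}\|^2/(2\lambda)\le(1-\chi)\bar\varepsilon/2$ fails, set $\lambda=\lambda/2$ and go to Step 1; else $\lambda_k=\lambda$, $\hat x_k=x$, $k\leftarrow k+1$, go to Step 1. *)

From HB Require Import structures.
From mathcomp Require Import all_boot all_order all_algebra.
From mathcomp Require Import boolp classical_sets reals constructive_ereal.
Set Implicit Arguments. Unset Strict Implicit. Unset Printing Implicit Defensive.
Import Order.TTheory GRing.Theory Num.Theory.
Local Open Scope ring_scope.
Local Open Scope ereal_scope.

Section Defs.
Variables (R : realType) (n : nat).
Notation V := 'rV[R]_n.

Definition dot (u v : V) : R := (\sum_(i < n) u ord0 i * v ord0 i)%R.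
Definition enorm (u : V) : R := Num.sqrt (dot u u).

Definition dom (f : V -> \bar R) : set V := [set x | f x < +oo].

Definition proper_fun (f : V -> \bar R) : Prop :=
  (forall x, f x != -oo) /\ exists x, f x < +oo.

Definition lsc (f : V -> \bar R) : Prop :=
  forall (x : V) (a : R), a%:E < f x ->
    exists2 d : R, (0 < d)%R & forall y, (enorm (y - x) < d)%R -> a%:E < f y.

Definition convex_fun (f : V -> \bar R) : Prop :=
  forall x y (t : R), x \in dom f -> y \in dom f -> (0 <= t <= 1)%R ->
    f (t *: x + (1 - t) *: y)%R <= t%:E * f x + (1 - t)%:E * f y.

Definition subgrad (f : V -> \bar R) (x g : V) : Prop :=
  forall z, f x + (dot g (z - x))%:E <= f z.

Definition lin (f : V -> \bar R) (f' : V -> V) (u x : V) : \bar R :=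
  f x + (dot (f' x) (u - x))%:E.

Definition prox_obj (f h : V -> \bar R) (f' : V -> V) (y : V) (lam : R) (u : V)
  : \bar R :=
  lin f f' u y + h u + (enorm (u - y) ^+ 2 / (2 * lam))%:E.

Definition is_prox_argmin (f h : V -> \bar R) (f' : V -> V) (y : V) (lam : R)
  (x : V) : Prop :=
  forall u, prox_obj f h f' y lam x <= prox_obj f h f' y lam u.

Definition step2_test (f : V -> \bar R) (f' : V -> V) (chi eps : R) (y : V)
  (lam : R) (x : V) : Prop :=
  f x - lin f f' x y - ((1 - chi) * enorm (x - y) ^+ 2 / (2 * lam))%:E
    <= ((1 - chi) * eps / 2)%:E.

(* Reachable states (hat x_{k-1}, lambda) at the start of an execution of
   Step 1 of U-CS(x0, chi, lam0, eps); phistar = inf phi. *)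
Inductive ucs_reach (f h : V -> \bar R) (f' : V -> V) (phistar : \bar R)
  (x0 : V) (chi lam0 eps : R) : V -> R -> Prop :=
| ucs_init : ucs_reach f h f' phistar x0 chi lam0 eps x0 lam0
| ucs_halve y lam x :
    ucs_reach f h f' phistar x0 chi lam0 eps y lam ->
    is_prox_argmin f h f' y lam x ->
    ~ (f x + h x - phistar <= eps%:E) ->
    ~ step2_test f f' chi eps y lam x ->
    ucs_reach f h f' phistar x0 chi lam0 eps y (lam / 2)
| ucs_accept y lam x :
    ucs_reach f h f' phistar x0 chi lam0 eps y lam ->
    is_prox_argmin f h f' y lam x ->
    ~ (f x + h x - phistar <= eps%:E) ->
    step2_test f f' chi eps y lam x ->
    ucs_reach f h f' phistar x0 chi lam0 eps x lam.

End Defs.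

(* Along the segment from y to x = y + d, summing the subgradient inequality
   over the grid y + (k/N) d and bounding each oracle increment by
   (2 M + L t |d|) |d| gives f(x) - l_f(x; y) <= 2 M |d| + L |d|^2 (N+1)/(2N),
   hence <= 2 M |d| + L |d|^2 / 2 in the limit.  Multiplied by 2 lam, the
   Step-2 test then reduces to 4 M lam |d| <= (1 - chi - L lam) |d|^2
   + (1 - chi) eps lam, an AM-GM inequality whose discriminant condition is
   implied by the stepsize bound; so from lam0 at that bound, no halving ever
   occurs. *)

From HB Require Import structures.
From mathcomp Require Import all_boot all_order all_algebra.
From mathcomp Require Import boolp classical_sets reals constructive_ereal.
From mathcomp Require Import ring lra.
Import Order.TTheory GRing.Theory Num.Theory.
Set Implicit Arguments. Unset Strict Implicit.
Local Open Scope ring_scope.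

Section EuclideanSpace.
Variables (R : realType) (n : nat).
Implicit Types (u v w : 'rV[R]_n) (s t : R).

Lemma dotC u v : dot u v = dot v u.
Proof. by apply: eq_bigr => i _; rewrite mulrC. Qed.

Lemma dot0l v : dot 0 v = 0.
Proof. by rewrite /dot big1 // => i _; rewrite mxE mul0r. Qed.

Lemma dotBl u v w : dot (u - v) w = dot u w - dot v w.
Proof.
by rewrite /dot -sumrB; apply: eq_bigr => i _; rewrite !mxE mulrBl.
Qed.

Lemma dotZl t u v : dot (t *: u) v = t * dot u v.
Proof. by rewrite /dot mulr_sumr; apply: eq_bigr => i _; rewrite mxE mulrA. Qed.

Lemma dotZr t u v : dot u (t *: v) = t * dot u v.
Proof. by rewrite dotC dotZl dotC. Qed.

Lemma dotvv_ge0 u : 0 <= dot u u.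
Proof. by apply: sumr_ge0 => i _; rewrite -expr2 sqr_ge0. Qed.

Lemma dot_amgm s t u v :
  2 * s * t * dot u v <= s ^+ 2 * dot u u + t ^+ 2 * dot v v.
Proof.
rewrite /dot !mulr_sumr -big_split /=; apply: ler_sum => i _.
have := sqr_ge0 (s * u ord0 i - t * v ord0 i); nra.
Qed.

Lemma enorm_ge0 u : 0 <= enorm u.
Proof. exact: sqrtr_ge0. Qed.

Lemma enorm_sqr u : enorm u ^+ 2 = dot u u.
Proof. exact/sqr_sqrtr/dotvv_ge0. Qed.

Lemma enorm_eq0 u : (enorm u == 0) = (u == 0).
Proof.
rewrite sqrtr_eq0 le_eqVlt ltNge dotvv_ge0 orbF.
apply/idP/eqP => [/eqP/psumr_eq0P u0|->]; last by rewrite dot0l.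
apply/rowP => i; apply/eqP; rewrite mxE -sqrf_eq0 expr2.
by apply/eqP/u0 => // j _; rewrite -expr2 sqr_ge0.
Qed.

Lemma enormZ t u : enorm (t *: u) = `|t| * enorm u.
Proof.
by rewrite /enorm dotZl dotZr mulrA -expr2 sqrtrM ?sqr_ge0 // sqrtr_sqr.
Qed.

Lemma dot_le_enorm u v : dot u v <= enorm u * enorm v.
Proof.
have [->|u0] := eqVneq u 0; first by rewrite dot0l /enorm dot0l sqrtr0 mul0r.
have [->|v0] := eqVneq v 0.
  by rewrite dotC dot0l /enorm dot0l sqrtr0 mulr0.
have a0 : 0 < enorm u by rewrite lt_def enorm_eq0 u0 enorm_ge0.
have b0 : 0 < enorm v by rewrite lt_def enorm_eq0 v0 enorm_ge0.
have := dot_amgm (enorm v) (enorm u) u v.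
rewrite -!enorm_sqr; set a := enorm u; set b := enorm v; set p := dot u v.
have ab0 : 0 < a * b by rewrite mulr_gt0.
nra.
Qed.

End EuclideanSpace.

Lemma ler_of_le_add_divn (R : archiRealFieldType) (x y c : R) :
  (forall N : nat, (0 < N)%N -> x <= y + c / N%:R) -> x <= y.
Proof.
move=> le_xy; apply/ler_addgt0Pr => e e0.
have ce0 : 0 <= `|c| / e := divr_ge0 (normr_ge0 c) (ltW e0).
pose N := (Num.bound (`|c| / e)).+1.
have N0 : 0 < N%:R :> R by rewrite ltr0n.
have ltN : `|c| / e < N%:R by rewrite (lt_le_trans (archi_boundP ce0)) ?ler_nat.
apply: (le_trans (le_xy N isT)); rewrite lerD2l ler_pdivrMr //.
rewrite ltr_pdivrMr // in ltN.
by rewrite (le_trans (ler_norm c)) // mulrC ltW.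
Qed.

Section LinearizationGap.
Variables (R : realType) (n : nat).
Variables (P : 'rV[R]_n -> Prop) (F : 'rV[R]_n -> R) (g : 'rV[R]_n -> 'rV[R]_n).
Variables (M L : R).
Hypothesis subgradF : forall z w, P z -> P w -> F z + dot (g z) (w - z) <= F w.
Hypothesis g_holder :
  forall z w, P z -> P w -> enorm (g z - g w) <= 2 * M + L * enorm (z - w).

Variables (y d : 'rV[R]_n).
Hypothesis segment_in : forall t, 0 <= t <= 1 -> P (y + t *: d).

Lemma lin_gap_step s t : 0 <= s <= t -> t <= 1 ->
  F (y + t *: d) - F (y + s *: d) - (t - s) * dot (g y) d
    <= (t - s) * ((2 * M + L * (t * enorm d)) * enorm d).
Proof.
move=> /andP[s0 st] t1.
have t0 : 0 <= t := le_trans s0 st.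
have Py : P y by have := @segment_in 0; rewrite scale0r addr0 lexx ler01; apply.
have Ps : P (y + s *: d) by apply: segment_in; rewrite s0 (le_trans st).
have Pt : P (y + t *: d) by apply: segment_in; rewrite t0.
have sub := subgradF Pt Ps.
rewrite opprD addrACA subrr add0r -scalerBl dotZr in sub.
have gap : dot (g (y + t *: d)) d - dot (g y) d
    <= (2 * M + L * (t * enorm d)) * enorm d.
  rewrite -dotBl (le_trans (dot_le_enorm _ _)) // ler_wpM2r ?enorm_ge0 //.
  by rewrite (le_trans (g_holder Pt Py)) // addrAC subrr add0r enormZ ger0_norm.
have ts0 : 0 <= t - s by rewrite subr_ge0.
have := ler_wpM2l ts0 gap; nra.
Qed.

Lemma lin_gap_le_grid N : (0 < N)%N ->
  F (y + d) - F y - dot (g y) d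
    <= 2 * M * enorm d + L / 2 * enorm d ^+ 2 + L / 2 * enorm d ^+ 2 / N%:R.
Proof.
move=> N_gt0; set r := enorm d; set Q := dot (g y) d.
have N0 : 0 < N%:R :> R by rewrite ltr0n.
pose grid (k : nat) : R := k%:R / N%:R.
have grid_ge0 (k : nat) : 0 <= grid k by rewrite divr_ge0 // ltW.
have partial (k : nat) : (k <= N)%N ->
  F (y + grid k *: d) - F y - grid k * Q
    <= grid k * (2 * M * r) + L / 2 * r ^+ 2 * (k%:R * (k%:R + 1)) / N%:R ^+ 2.
  elim: k => [|k IH] le_kN.
    by rewrite /grid !mul0r scale0r addr0 subrr !(mul0r, mulr0) subr0 addr0.
  have mono : 0 <= grid k <= grid k.+1.
    by rewrite grid_ge0 /= /grid ler_pM2r ?ler_nat ?invr_gt0.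
  have le1 : grid k.+1 <= 1 by rewrite ler_pdivrMr // mul1r ler_nat.
  have := lin_gap_step mono le1; rewrite -/r -/Q.
  have := IH (ltnW le_kN).
  have -> : grid k.+1 * (2 * M * r)
        + L / 2 * r ^+ 2 * (k.+1%:R * (k.+1%:R + 1)) / N%:R ^+ 2
      = (grid k.+1 - grid k) * ((2 * M + L * (grid k.+1 * r)) * r)
        + (grid k * (2 * M * r)
           + L / 2 * r ^+ 2 * (k%:R * (k%:R + 1)) / N%:R ^+ 2).
    by rewrite /grid -natr1; field; rewrite lt0r_neq0.
  lra.
have := partial N (leqnn N).
have -> : grid N = 1 by rewrite /grid divff // lt0r_neq0.
have -> : L / 2 * r ^+ 2 * (N%:R * (N%:R + 1)) / N%:R ^+ 2
    = L / 2 * r ^+ 2 + L / 2 * r ^+ 2 / N%:R.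
  by field; rewrite lt0r_neq0.
by rewrite scale1r !mul1r addrA.
Qed.

Lemma lin_gap_le :
  F (y + d) - F y - dot (g y) d <= 2 * M * enorm d + L / 2 * enorm d ^+ 2.
Proof. exact: ler_of_le_add_divn lin_gap_le_grid. Qed.

End LinearizationGap.

Lemma amgm_quadratic (R : realFieldType) (b c p r : R) :
  0 <= c -> 0 <= p -> b ^+ 2 <= p * c -> 2 * b * r <= c * r ^+ 2 + p.
Proof.
move=> c0 p0 bpc; have [c_gt0|] := ltP 0 c.
  rewrite -(ler_pM2l c_gt0); have := sqr_ge0 (c * r - b); nra.
move=> c_le0; have c00 : c = 0 by apply/le_anti/andP.
have b0 : b = 0.
  apply/eqP; rewrite -sqrf_eq0 eq_le sqr_ge0 andbT.
  by rewrite (le_trans bpc) // c00 mulr0.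
by rewrite b0 c00 mulr0 !mul0r add0r.
Qed.

Lemma step2_test_arith (R : realFieldType) (E M L r a lam eps : R) :
  0 <= L -> 0 < a <= 1 -> 0 < lam -> 0 < eps ->
  lam * (4 * M ^+ 2 + eps * L) <= a ^+ 2 * eps ->
  E <= 2 * M * r + L / 2 * r ^+ 2 ->
  E - a * r ^+ 2 / (2 * lam) <= a * eps / 2.
Proof.
move=> L0 /andP[a0 a1] lam0 eps0 step_small E_le.
have epsL0 : 0 <= eps * L * lam by rewrite !mulr_ge0 // ltW.
have La : L * lam <= a.
  rewrite -(ler_pM2l eps0); have : a ^+ 2 <= a by nra.
  have : 0 <= M ^+ 2 by exact: sqr_ge0.
  nra.
have amgm : 2 * (2 * M * lam) * r <= (a - L * lam) * r ^+ 2 + a * eps * lam.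
  apply: amgm_quadratic; first by rewrite subr_ge0.
    by rewrite !mulr_ge0 // ltW.
  have : a * (eps * L * lam) <= eps * L * lam by rewrite ler_piMl.
  nra.
rewrite lerBlDr -(ler_pM2l (_ : 0 < 2 * lam)) ?mulr_gt0 //.
have -> : 2 * lam * (a * eps / 2 + a * r ^+ 2 / (2 * lam))
    = a * r ^+ 2 + a * eps * lam by field; rewrite lt0r_neq0.
nra.
Qed.

Section UCS.
Variables (R : realType) (n : nat).
Variables (f h : 'rV[R]_n -> \bar R) (f' : 'rV[R]_n -> 'rV[R]_n) (M L : R).
Variables (phistar : \bar R) (x0 : 'rV[R]_n) (chi lam0 eps : R).
Hypothesis f_neqNy : forall x, (f x != -oo)%E.
Hypothesis h_neqNy : forall x, (h x != -oo)%E.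
Hypothesis h_convex : convex_fun h.
Hypothesis dom_hf : (dom h `<=` dom f)%classic.
Hypothesis f'_subgrad : forall x, x \in dom h -> subgrad f x (f' x).
Hypothesis L_ge0 : 0 <= L.
Hypothesis f'_holder : forall x y, x \in dom h -> y \in dom h ->
  enorm (f' x - f' y) <= 2 * M + L * enorm (x - y).
Hypothesis x0_dom : x0 \in dom h.
Hypothesis chi01 : 0 <= chi < 1.
Hypothesis lam0_gt0 : 0 < lam0.
Hypothesis eps_gt0 : 0 < eps.

Notation reach := (ucs_reach f h f' phistar x0 chi lam0 eps).

Lemma dom_fin_h x : x \in dom h -> h x = (fine (h x))%:E.
Proof. by move/set_mem => hx; rewrite fineK // fin_numE h_neqNy -ltey. Qed.

Lemma dom_fin_f x : x \in dom h -> f x = (fine (f x))%:E.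
Proof.
by move/set_mem/dom_hf => fx; rewrite fineK // fin_numE f_neqNy -ltey.
Qed.

Lemma dom_segment x y t : x \in dom h -> y \in dom h -> 0 <= t <= 1 ->
  y + t *: (x - y) \in dom h.
Proof.
move=> xD yD t01; apply: mem_set.
have -> : y + t *: (x - y) = t *: x + (1 - t) *: y.
  by rewrite scalerBr scalerBl scale1r addrCA.
apply: le_lt_trans (h_convex xD yD t01) _.
by rewrite (dom_fin_h xD) (dom_fin_h yD) -!EFinM -EFinD ltry.
Qed.

Lemma prox_argmin_dom y lam x : y \in dom h ->
  is_prox_argmin f h f' y lam x -> x \in dom h.
Proof.
move=> yD xmin; apply: mem_set; rewrite /dom /= ltey; apply/negP => /eqP hx.
have := xmin y; rewrite /prox_obj /lin hx (dom_fin_f yD) (dom_fin_h yD).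
by rewrite -EFinD addey // addye // -!EFinD leye_eq.
Qed.

Lemma ucs_reach_dom y lam : reach y lam -> y \in dom h /\ 0 < lam.
Proof.
elim=> [|{}y {}lam x _ [yD lam_gt0] _ _ _|{}y {}lam x _ [yD lam_gt0] xmin _ _]
  //.
- by rewrite divr_gt0.
- by split=> //; apply: prox_argmin_dom xmin.
Qed.

Lemma dom_lin_gap x y : x \in dom h -> y \in dom h ->
  fine (f x) - fine (f y) - dot (f' y) (x - y)
    <= 2 * M * enorm (x - y) + L / 2 * enorm (x - y) ^+ 2.
Proof.
move=> xD yD; rewrite -[in fine (f x)](subrKC y x).
apply: (lin_gap_le (P := fun z => z \in dom h) (F := fine \o f)) => //.
- move=> z w zD wD /=; have := f'_subgrad zD w.
  by rewrite (dom_fin_f zD) (dom_fin_f wD) -EFinD lee_fin.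
- by move=> t; apply: dom_segment.
Qed.

Lemma ucs_step2_test y lam x : reach y lam ->
  lam * (4 * M ^+ 2 + eps * L) <= (1 - chi) ^+ 2 * eps ->
  is_prox_argmin f h f' y lam x -> step2_test f f' chi eps y lam x.
Proof.
move=> /ucs_reach_dom[yD lam_gt0] lam_small xmin.
have xD := prox_argmin_dom yD xmin.
rewrite /step2_test /lin (dom_fin_f xD) (dom_fin_f yD) -!EFinD lee_fin.
apply: step2_test_arith lam_small _ => //.
  by move: chi01 => /andP[? ?]; apply/andP; split; lra.
by rewrite opprD addrA dom_lin_gap.
Qed.

Lemma ucs_stepsize_const :
  lam0 = (1 - chi) ^+ 2 * eps / (4 * M ^+ 2 + eps * L) ->
  forall y lam, reach y lam -> lam = lam0.
Proof.
move=> lam0E; set D := 4 * M ^+ 2 + eps * L in lam0E.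
have D_gt0 : 0 < D.
  have D_ge0 : 0 <= D.
    by rewrite addr_ge0 // mulr_ge0 ?sqr_ge0 // ltW.
  rewrite lt_def D_ge0 andbT.
  by apply: contraTneq lam0_gt0 => D0; rewrite lam0E D0 invr0 mulr0 ltxx.
have lam0D : lam0 * D = (1 - chi) ^+ 2 * eps by rewrite lam0E divfK ?lt0r_neq0.
move=> y lam; elim=> [|{}y {}lam x reach_y IH xmin _ test_fails|] //.
case: test_fails; apply: ucs_step2_test reach_y _ xmin.
by rewrite IH lam0D.
Qed.

End UCS.

Local Open Scope ereal_scope.

Theorem lemma2p1 (R : realType) (n : nat)
  (f h : 'rV[R]_n -> \bar R) (f' : 'rV[R]_n -> 'rV[R]_n) (Mf Lf : R)
  (x0 xs : 'rV[R]_n) (chi lam0 eps : R) :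
  proper_fun f -> lsc f -> convex_fun f ->
  proper_fun h -> lsc h -> convex_fun h ->
  (dom h `<=` dom f)%classic ->
  (forall u, f xs + h xs <= f u + h u) ->
  (forall x, x \in dom h -> subgrad f x (f' x)) ->
  (0 <= Mf)%R -> (0 <= Lf)%R ->
  (forall x y, x \in dom h -> y \in dom h ->
     (enorm (f' x - f' y) <= 2 * Mf + Lf * enorm (x - y))%R) ->
  x0 \in dom h -> (0 <= chi < 1)%R -> (0 < lam0)%R -> (0 < eps)%R ->
  let phistar := f xs + h xs in
  (forall y lam x,
     ucs_reach f h f' phistar x0 chi lam0 eps y lam ->
     (lam * (4 * Mf ^+ 2 + eps * Lf) <= (1 - chi) ^+ 2 * eps)%R ->
     is_prox_argmin f h f' y lam x ->
     step2_test f f' chi eps y lam x)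
  /\
  (lam0 = ((1 - chi) ^+ 2 * eps / (4 * Mf ^+ 2 + eps * Lf))%R ->
   forall y lam, ucs_reach f h f' phistar x0 chi lam0 eps y lam -> lam = lam0).
Proof.
move=> [f_neqNy _] _ _ [h_neqNy _] _ h_convex dom_hf _ f'_subgrad _ Lf_ge0.
move=> f'_holder x0_dom chi01 lam0_gt0 eps_gt0 phistar; split.
- by move=> y lam x; apply: ucs_step2_test.
- by apply: ucs_stepsize_const.
Qed.
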